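(* Let $G$ be a finite group acting on a finite set $\mathsf X$, and let $L:G\times G\times\mathsf X\to\mathbb{C}^\times$, $(g,h,x)\mapsto L^x_{g,h}$, and $\omega:G^3\to\mathbb{C}^\times$ satisfy $$L^x_{g,hk}\,L^x_{h,k}=\omega(g,h,k)\,L^{kx}_{g,h}\,L^x_{gh,k}\qquad\text{for all }g,h,k\in G,\ x\in\mathsf X.$$ Then the following are equivalent: (1) there is a gauge transformation $(\beta,\gamma)$ such that the transformed symbols satisfy $L'^x_{g,h}=1$ for all $g,h,x$; (2) there is a gauge transformation such that $L'^x_{a,b}=L'^y_{a,b}$ for all $a,b\in G$, $x,y\in\mathsf X$; (3) there is a gauge transformation such that $\ell'^x_{a,b;g}=1$ for all $a,b,g\in G$, $x\in\mathsf X$; (4) $L$ is block independent, i.e. there is a gauge transformation such that $\ell'^x_{a,b;g}=\ell'^y_{a,b;g}$ for all $a,b,g\in G$, $x,y\in\mathsf X$.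
   Context: A gauge transformation is a pair of functions $\beta:G\times G\to\mathbb{C}^\times$, $\gamma:G\times\mathsf X\to\mathbb{C}^\times$ ($(g,x)\mapsto\gamma^x_g$); it maps $L$ to $L'^x_{g,h}=\dfrac{\beta_{g,h}\,\gamma^x_{gh}}{\gamma^{hx}_{g}\,\gamma^x_h}L^x_{g,h}$. For any such family $L$ define $\ell^x_{a,b;g}=\dfrac{L^x_{ag,\,g^{-1}b}}{L^x_{a,b}}$, and $\ell'$ the same expression built from $L'$. Here $gx$ denotes the action of $g\in G$ on $x\in\mathsf X$. *)

From mathcomp Require Import all_boot all_algebra all_fingroup.
From mathcomp Require Import complex Rstruct.
Set Implicit Arguments. Unset Strict Implicit. Unset Printing Implicit Defensive.
Import GRing.Theory.
Local Open Scope ring_scope.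

Definition CC : fieldType := complex Rdefinitions.R.

Section Gauge.
Variables (gT : finGroupType) (X : finType) (act : gT -> X -> X).

Definition is_left_action : Prop :=
  (forall x, act 1%g x = x) /\ (forall g h x, act (g * h)%g x = act g (act h x)).

Definition gauge (beta : gT -> gT -> CC) (gamma : gT -> X -> CC)
  (L : gT -> gT -> X -> CC) : gT -> gT -> X -> CC :=
  fun g h x => beta g h * gamma (g * h)%g x / (gamma g (act h x) * gamma h x) * L g h x.

Definition ell (L : gT -> gT -> X -> CC) (a b g : gT) (x : X) : CC :=
  L (a * g)%g (g^-1 * b)%g x / L a b x.

Definition exists_gauge (L : gT -> gT -> X -> CC) (P : (gT -> gT -> X -> CC) -> Prop) : Prop :=
  exists (beta : gT -> gT -> CC) (gamma : gT -> X -> CC),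
    [/\ forall g h, beta g h != 0, forall g x, gamma g x != 0 & P (gauge beta gamma L)].

End Gauge.

From mathcomp Require Import all_boot all_algebra all_fingroup.
From mathcomp Require Import complex Rstruct.
From mathcomp Require Import ring.
From Stdlib Require Import FunctionalExtensionality.
Set Implicit Arguments. Unset Strict Implicit. Unset Printing Implicit Defensive.
Local Open Scope ring_scope.
Import GRing.Theory.

(* Gauge transformations compose, and (1) => (3) => (4) and (1) => (2) are
   immediate.  A symbol independent of x is trivialised by beta = 1/L.
   For (4) => (2), the cocycle condition at (1,1,k) and (g,1,1) gives
   L_{1,k}^x ~ L_{1,1}^{kx} and L_{1,1}^{y} ~ L_{g,1}^{y} up to x-independent
   factors, and L_{g,h}^x = ell^x_{1,gh;g} L_{1,gh}^x.  Hence
   L_{g,h}^x / L_{1,1}^{hx} is a product of x-independent factors and values of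
   ell, so gauging by gamma_g^x = L_{1,1}^x removes the x-dependence. *)

Section Gauge.
Variables (gT : finGroupType) (X : finType) (act : gT -> X -> X).

Definition twisted_cocycle (L : gT -> gT -> X -> CC) (omega : gT -> gT -> gT -> CC) :=
  forall g h k x,
    L g (h * k)%g x * L h k x = omega g h k * L g h (act k x) * L (g * h)%g k x.

Definition gauge_omega (beta : gT -> gT -> CC) (omega : gT -> gT -> gT -> CC) g h k :=
  omega g h k * beta g (h * k)%g * beta h k / (beta g h * beta (g * h)%g k).

Lemma gauge_neq0 beta gamma (L : gT -> gT -> X -> CC) :
    (forall g h, beta g h != 0) -> (forall g x, gamma g x != 0) ->
    (forall g h x, L g h x != 0) ->
  forall g h x, gauge act beta gamma L g h x != 0.
Proof. by move=> bn cn Ln g h x; rewrite !(mulf_neq0, invr_eq0). Qed.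

Lemma gaugeM beta1 gamma1 beta2 gamma2 (L : gT -> gT -> X -> CC) g h x :
  gauge act beta2 gamma2 (gauge act beta1 gamma1 L) g h x =
  gauge act (fun g h => beta1 g h * beta2 g h) (fun g x => gamma1 g x * gamma2 g x)
    L g h x.
Proof. by rewrite /gauge !invfM; ring. Qed.

Lemma exists_gauge_gauge beta gamma (L : gT -> gT -> X -> CC) P :
    (forall g h, beta g h != 0) -> (forall g x, gamma g x != 0) ->
  exists_gauge act (gauge act beta gamma L) P -> exists_gauge act L P.
Proof.
move=> bn cn [beta' [gamma' [bn' cn' HP]]].
exists (fun g h => beta g h * beta' g h), (fun g x => gamma g x * gamma' g x).
split=> [g h|g x|]; rewrite ?mulf_neq0 //.
by congr P: HP; do 3!apply: functional_extensionality => ?; rewrite gaugeM.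
Qed.

Lemma trivial_gauge_of_x_independent (L : gT -> gT -> X -> CC) :
    (forall g h x, L g h x != 0) -> (forall g h x y, L g h x = L g h y) ->
  exists_gauge act L (fun L' => forall g h x, L' g h x = 1).
Proof.
move=> Ln Lindep.
case: (pickP (fun _ : X => true)) => [x0 _|noX]; last first.
  exists (fun _ _ => 1), (fun _ _ => 1).
  by split=> [_ _|_ _|g h x]; rewrite ?oner_neq0 //; have := noX x.
exists (fun g h => (L g h x0)^-1), (fun _ _ => 1).
split=> [g h|_ _|g h x]; rewrite ?invr_eq0 ?oner_neq0 //.
by rewrite /gauge (Lindep g h x x0) mul1r invr1 !mulr1 mulVf.
Qed.

Lemma exists_gauge_trivial_of_x_independent (L : gT -> gT -> X -> CC) :
    (forall g h x, L g h x != 0) ->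
    exists_gauge act L (fun L' => forall g h x y, L' g h x = L' g h y) ->
  exists_gauge act L (fun L' => forall g h x, L' g h x = 1).
Proof.
move=> Ln [beta [gamma [bn cn Mindep]]]; apply: (exists_gauge_gauge bn cn).
exact: trivial_gauge_of_x_independent (gauge_neq0 bn cn Ln) Mindep.
Qed.

Hypothesis actH : is_left_action act.

Lemma gauge_twisted_cocycle beta gamma (L : gT -> gT -> X -> CC) omega :
    (forall g h, beta g h != 0) -> (forall g x, gamma g x != 0) ->
    (forall g h x, L g h x != 0) -> twisted_cocycle L omega ->
  twisted_cocycle (gauge act beta gamma L) (gauge_omega beta omega).
Proof.
move=> bn cn Ln coc g h k x; rewrite /gauge /gauge_omega.
have -> : L g (h * k)%g x = omega g h k * L g h (act k x) * L (g * h)%g k x / L h k x.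
  by rewrite -coc mulfK.
rewrite -actH.2 mulgA.
by field; rewrite !bn !cn Ln.
Qed.

Section NormalizedCocycle.
Variables (L : gT -> gT -> X -> CC) (omega : gT -> gT -> gT -> CC).
Hypotheses (Ln : forall g h x, L g h x != 0) (coc : twisted_cocycle L omega).

Lemma cocycle_1_1 k x : L 1%g k x = omega 1%g 1%g k * L 1%g 1%g (act k x).
Proof. by apply: (mulIf (Ln 1%g k x)); rewrite -{1}[k]mul1g coc mul1g. Qed.

Lemma cocycle_g_1 g y : L 1%g 1%g y = omega g 1%g 1%g * L g 1%g y.
Proof.
apply: (mulIf (Ln g 1%g y)); rewrite mulrC.
by have := coc g 1%g 1%g y; rewrite !mulg1 actH.1.
Qed.

Lemma ell_1_decomposition g h x : L g h x = ell L 1 (g * h) g x * L 1%g (g * h)%g x.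
Proof. by rewrite /ell mul1g mulKg divfK. Qed.

Lemma cocycle_ratio g h x :
  L g h x / L 1%g 1%g (act h x) =
  ell L 1 (g * h) g x * omega 1%g 1%g (g * h)%g /
    (omega g 1%g 1%g * ell L 1 g g (act h x) * omega 1%g 1%g g).
Proof.
set y := act (g * h) x.
have -> : L g h x = ell L 1 (g * h) g x * omega 1%g 1%g (g * h)%g * L 1%g 1%g y.
  by rewrite ell_1_decomposition cocycle_1_1 mulrA.
have -> : L 1%g 1%g (act h x) =
          omega g 1%g 1%g * ell L 1 g g (act h x) * omega 1%g 1%g g * L 1%g 1%g y.
  rewrite (cocycle_g_1 g) -{1}[g]mulg1 ell_1_decomposition mulg1 cocycle_1_1.
  by rewrite -actH.2 !mulrA.
by rewrite [in LHS]invfM mulrACA divff ?mulr1.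
Qed.

End NormalizedCocycle.

Lemma x_independent_gauge_of_block_independent (L : gT -> gT -> X -> CC) omega :
    (forall g h x, L g h x != 0) -> twisted_cocycle L omega ->
    (forall a b g x y, ell L a b g x = ell L a b g y) ->
  exists_gauge act L (fun L' => forall g h x y, L' g h x = L' g h y).
Proof.
move=> Ln coc Lblock.
exists (fun _ _ => 1), (fun _ x => L 1%g 1%g x).
split=> [_ _|_ z|g h x y]; rewrite ?oner_neq0 ?Ln //.
have gaugeE z : gauge act (fun _ _ => 1) (fun _ x => L 1%g 1%g x) L g h z =
                L g h z / L 1%g 1%g (act h z).
  by rewrite /gauge; field; rewrite !Ln.
rewrite !gaugeE !(cocycle_ratio Ln coc).
by rewrite (Lblock 1%g _ g x y) (Lblock 1%g g g (act h x) (act h y)).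
Qed.

End Gauge.

Theorem mainTheorem7 (gT : finGroupType) (X : finType) (act : gT -> X -> X)
  (L : gT -> gT -> X -> CC) (omega : gT -> gT -> gT -> CC) :
  is_left_action act ->
  (forall g h x, L g h x != 0) ->
  (forall g h k, omega g h k != 0) ->
  (forall g h k x,
     L g (h * k)%g x * L h k x = omega g h k * L g h (act k x) * L (g * h)%g k x) ->
  [<-> exists_gauge act L (fun L' => forall g h x, L' g h x = 1);
       exists_gauge act L (fun L' => forall a b x y, L' a b x = L' a b y);
       exists_gauge act L (fun L' => forall a b g x, ell L' a b g x = 1);
       exists_gauge act L (fun L' => forall a b g x y, ell L' a b g x = ell L' a b g y)].
Proof.
move=> actH Ln _ coc.
have trivial_of_x_independent := @exists_gauge_trivial_of_x_independent _ _ act L Ln.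
tfae.
- by case=> beta [gamma [bn cn H]]; exists beta, gamma; split=> // a b x y; rewrite !H.
- move/trivial_of_x_independent => [beta [gamma [bn cn H]]].
  by exists beta, gamma; split=> // a b g x; rewrite /ell !H divr1.
- by case=> beta [gamma [bn cn H]]; exists beta, gamma; split=> // a b g x y; rewrite !H.
- case=> beta [gamma [bn cn H]]; apply: trivial_of_x_independent.
  apply: (exists_gauge_gauge bn cn).
  have Mn := gauge_neq0 act bn cn Ln.
  have Mcoc := gauge_twisted_cocycle actH bn cn Ln coc.
  exact (x_independent_gauge_of_block_independent actH Mn Mcoc H).
Qed.
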